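(* (i) If $(A,W)$ is a Pratt comonoid, then so is $(A,W^\neg)$, where $W^\neg=\{A-w\mid w\in W\}$; and if $(A,W)$ is $T_1$, so is $(A,W^\neg)$. (ii) If $\{(A,W_i)\mid i\in I\}$ is a (finite or infinite) set of Pratt comonoids with the same base-set $A$, then $(A,\bigcap_{i\in I}W_i)$ is a Pratt comonoid. (iii) If $f:A\to A'$ is a map of sets and $(A,W)$ is a Pratt comonoid, and $W'=\{w\subseteq A'\mid f^{-1}(w)\in W\}$, then $(A',W')$ is a Pratt comonoid. (iv) If $(A,W)$ is a Pratt comonoid and $u\subseteq v$ are elements of $W$, then $(A_{u,v},W_{u,v})$ is a Pratt comonoid, where $A_{u,v}=v-u$ and $W_{u,v}=\{x-u\mid x\in W,\ u\subseteq x\subseteq v\}$.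
   Context: A Pratt comonoid is a pair $(A,W)$ where $A$ is a set and $W$ is a set of subsets of $A$ such that (i) $\emptyset\in W$ and $A\in W$; (ii) whenever $C\subseteq A\times A$ is such that for every $a\in A$ both the $a$-th row $\{b\mid (a,b)\in C\}$ and the $a$-th column $\{b\mid (b,a)\in C\}$ belong to $W$ (a crossword over $W$), the diagonal $\{b\mid (b,b)\in C\}$ also belongs to $W$. $A$ is called the base-set. $(A,W)$ is $T_1$ if for all distinct $a,b\in A$ some member of $W$ contains $a$ but not $b$. *)

Definition crossword {A : Type} (W : (A -> Prop) -> Prop) (C : A -> A -> Prop) : Prop :=
  forall a : A, W (fun b => C a b) /\ W (fun b => C b a).

Definition pratt_comonoid (A : Type) (W : (A -> Prop) -> Prop) : Prop :=
  W (fun _ => False) /\ W (fun _ => True) /\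
  (forall C : A -> A -> Prop, crossword W C -> W (fun b => C b b)).

Definition T1 (A : Type) (W : (A -> Prop) -> Prop) : Prop :=
  forall a b : A, a <> b -> exists w, W w /\ w a /\ ~ w b.

Definition Wneg {A : Type} (W : (A -> Prop) -> Prop) : (A -> Prop) -> Prop :=
  fun s => exists w, W w /\ s = (fun x => ~ w x).

Definition Wbigcap {A I : Type} (Ws : I -> (A -> Prop) -> Prop) : (A -> Prop) -> Prop :=
  fun s => forall i : I, Ws i s.

Definition Wpush {A A' : Type} (f : A -> A') (W : (A -> Prop) -> Prop) : (A' -> Prop) -> Prop :=
  fun w => W (fun a => w (f a)).

Definition Auv {A : Type} (u v : A -> Prop) : Type := { a : A | v a /\ ~ u a }.

Definition Wuv {A : Type} (W : (A -> Prop) -> Prop) (u v : A -> Prop) : (Auv u v -> Prop) -> Prop :=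
  fun s => exists x, W x /\ (forall a, u a -> x a) /\ (forall a, x a -> v a) /\
                     s = (fun p : Auv u v => x (proj1_sig p)).

(** Each part transports crosswords.  For [W^neg], complementing every cell of a
    crossword over [W^neg] gives a crossword over [W], whose diagonal is the
    complement of the original one.
    For [W_{u,v}], the map [s |-> u ∪ s] identifies [W_{u,v}] with the members of
    [W] lying between [u] and [v]; a crossword [C] on [v - u] then extends to one
    on [A] by filling the rows and columns indexed by [u] with [A] and those
    indexed outside [v] with [u], and its diagonal is [u] together with that of
    [C]. *)

From Stdlib Require Import Classical FunctionalExtensionality PropExtensionality ProofIrrelevance.

Lemma pred_ext {A : Type} (P Q : A -> Prop) : (forall x, P x <-> Q x) -> P = Q.
Proof.
  intro H; apply functional_extensionality; intro x.
  apply propositional_extensionality, H.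
Qed.

Lemma Wneg_spec {A : Type} (W : (A -> Prop) -> Prop) (s : A -> Prop) :
  Wneg W s <-> W (fun x => ~ s x).
Proof.
  split.
  - intros [w [Hw ->]].
    replace (fun x => ~ ~ w x) with w; [exact Hw|].
    apply pred_ext; intro x; split; [tauto | apply NNPP].
  - intro Hs; exists (fun x => ~ s x); split; [exact Hs|].
    apply pred_ext; intro x; split; [tauto | apply NNPP].
Qed.

Lemma pratt_comonoid_Wneg (A : Type) (W : (A -> Prop) -> Prop) :
  pratt_comonoid A W -> pratt_comonoid A (Wneg W).
Proof.
  intros [W0 [W1 Wdiag]]; split; [|split].
  - apply Wneg_spec.
    replace (fun _ : A => ~ False) with (fun _ : A => True); [exact W1|].
    apply pred_ext; tauto.
  - apply Wneg_spec.
    replace (fun _ : A => ~ True) with (fun _ : A => False); [exact W0|].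
    apply pred_ext; tauto.
  - intros C HC; apply Wneg_spec, (Wdiag (fun a b => ~ C a b)).
    intro a; split; apply Wneg_spec, HC.
Qed.

Lemma T1_Wneg (A : Type) (W : (A -> Prop) -> Prop) : T1 A W -> T1 A (Wneg W).
Proof.
  intros HT a b Hab.
  destruct (HT b a (not_eq_sym Hab)) as [w [Hw [wb Nwa]]].
  exists (fun x => ~ w x); split; [exists w; auto | tauto].
Qed.

Lemma pratt_comonoid_Wbigcap (A I : Type) (Ws : I -> (A -> Prop) -> Prop) :
  (forall i, pratt_comonoid A (Ws i)) -> pratt_comonoid A (Wbigcap Ws).
Proof.
  intro H; split; [|split].
  - intro i; exact (proj1 (H i)).
  - intro i; exact (proj1 (proj2 (H i))).
  - intros C HC i; apply (proj2 (proj2 (H i))); intro a; split; apply HC.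
Qed.

Lemma pratt_comonoid_Wpush (A A' : Type) (f : A -> A') (W : (A -> Prop) -> Prop) :
  pratt_comonoid A W -> pratt_comonoid A' (Wpush f W).
Proof.
  intros [W0 [W1 Wdiag]]; split; [exact W0 | split; [exact W1|]].
  intros C HC; apply (Wdiag (fun a b => C (f a) (f b))).
  intro a; exact (HC (f a)).
Qed.

Section Interval.

Variables (A : Type) (W : (A -> Prop) -> Prop) (u v : A -> Prop).
Hypothesis sub_uv : forall a, u a -> v a.

Definition Auv_lift (s : Auv u v -> Prop) (a : A) : Prop :=
  u a \/ exists h : v a /\ ~ u a, s (exist _ a h).

Lemma Auv_lift_restrict (x : A -> Prop) :
  (forall a, u a -> x a) -> (forall a, x a -> v a) ->
  Auv_lift (fun p : Auv u v => x (proj1_sig p)) = x.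
Proof.
  intros ux xv; apply pred_ext; intro a; split.
  - intros [ua | [h xa]]; auto.
  - intro xa; destruct (classic (u a)) as [ua | nua]; [now left|].
    right; now exists (conj (xv a xa) nua).
Qed.

Lemma Auv_restrict_lift (s : Auv u v -> Prop) :
  (fun p : Auv u v => Auv_lift s (proj1_sig p)) = s.
Proof.
  apply pred_ext; intros [a h]; simpl; split.
  - intros [ua | [h' sa]]; [now destruct (proj2 h ua)|].
    now rewrite (proof_irrelevance _ h h').
  - intro sa; right; now exists h.
Qed.

Lemma Wuv_spec (s : Auv u v -> Prop) : Wuv W u v s <-> W (Auv_lift s).
Proof.
  split.
  - intros [x [Wx [ux [xv ->]]]]; now rewrite Auv_lift_restrict.
  - intro Ws; exists (Auv_lift s); split; [exact Ws|]; split; [|split].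
    + now left.
    + intros a [ua | [h _]]; [now apply sub_uv | exact (proj1 h)].
    + symmetry; apply Auv_restrict_lift.
Qed.

Definition crossword_lift (C : Auv u v -> Auv u v -> Prop) (a b : A) : Prop :=
  u a \/ u b \/
  exists (ha : v a /\ ~ u a) (hb : v b /\ ~ u b), C (exist _ a ha) (exist _ b hb).

Lemma crossword_lift_flip (C : Auv u v -> Auv u v -> Prop) (a b : A) :
  crossword_lift C b a = crossword_lift (fun p q => C q p) a b.
Proof.
  apply propositional_extensionality; unfold crossword_lift.
  split; intros [H | [H | [h [h' c]]]]; auto; right; right; now exists h', h.
Qed.

Lemma crossword_lift_row (C : Auv u v -> Auv u v -> Prop) (a : A) :
  (forall p, Wuv W u v (fun q => C p q)) -> W (fun _ => True) -> W u ->
  W (fun b => crossword_lift C a b).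
Proof.
  intros Wrow W1 Wu.
  destruct (classic (u a)) as [ua | nua].
  - replace (fun b => crossword_lift C a b) with (fun _ : A => True); [exact W1|].
    apply pred_ext; intro b; unfold crossword_lift; tauto.
  - destruct (classic (v a)) as [va | nva].
    + set (p := exist (fun a => v a /\ ~ u a) a (conj va nua)).
      replace (fun b => crossword_lift C a b) with (Auv_lift (fun q => C p q));
        [now apply Wuv_spec|].
      apply pred_ext; intro b; unfold crossword_lift, Auv_lift; split.
      * intros [ub | [hb c]]; [now right; left|]; right; right; now exists (conj va nua), hb.
      * intros [H | [ub | [ha [hb c]]]]; [contradiction | now left|].
        right; exists hb; now rewrite (proof_irrelevance _ ha (conj va nua)) in c.
    + replace (fun b => crossword_lift C a b) with u; [exact Wu|].
      apply pred_ext; intro b; unfold crossword_lift; split; [tauto|].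
      intros [H | [H | [ha _]]]; tauto.
Qed.

Lemma crossword_lift_diag (C : Auv u v -> Auv u v -> Prop) :
  (fun b => crossword_lift C b b) = Auv_lift (fun p => C p p).
Proof.
  apply pred_ext; intro b; unfold crossword_lift, Auv_lift; split.
  - intros [ub | [ub | [h [h' c]]]]; auto.
    right; exists h; now rewrite (proof_irrelevance _ h' h) in c.
  - intros [ub | [h c]]; auto; right; right; now exists h, h.
Qed.

Lemma pratt_comonoid_Wuv :
  pratt_comonoid A W -> W u -> W v -> pratt_comonoid (Auv u v) (Wuv W u v).
Proof.
  intros [W0 [W1 Wdiag]] Wu Wv; split; [|split].
  - apply Wuv_spec.
    replace (Auv_lift (fun _ => False)) with u; [exact Wu|].
    apply pred_ext; intro a; unfold Auv_lift; split; [now left|].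
    intros [ua | [_ []]]; exact ua.
  - apply Wuv_spec.
    replace (Auv_lift (fun _ => True)) with v; [exact Wv|].
    apply pred_ext; intro a; unfold Auv_lift; split.
    + intro va; destruct (classic (u a)); [now left | right; now exists (conj va H)].
    + intros [ua | [h _]]; [now apply sub_uv | exact (proj1 h)].
  - intros C HC; apply Wuv_spec; rewrite <- crossword_lift_diag.
    apply Wdiag; intro a; split.
    + apply crossword_lift_row; auto; intro p; apply (HC p).
    + replace (fun b => crossword_lift C b a)
        with (fun b => crossword_lift (fun p q => C q p) a b)
        by (apply functional_extensionality; intro b; now rewrite crossword_lift_flip).
      apply crossword_lift_row; auto; intro p; apply (HC p).
Qed.

End Interval.

Theorem lemma2p2 :
  (* (i) *)
  (forall (A : Type) (W : (A -> Prop) -> Prop),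
     pratt_comonoid A W ->
     pratt_comonoid A (Wneg W) /\ (T1 A W -> T1 A (Wneg W))) /\
  (* (ii) *)
  (forall (A I : Type) (Ws : I -> (A -> Prop) -> Prop),
     (forall i, pratt_comonoid A (Ws i)) -> pratt_comonoid A (Wbigcap Ws)) /\
  (* (iii) *)
  (forall (A A' : Type) (f : A -> A') (W : (A -> Prop) -> Prop),
     pratt_comonoid A W -> pratt_comonoid A' (Wpush f W)) /\
  (* (iv) *)
  (forall (A : Type) (W : (A -> Prop) -> Prop) (u v : A -> Prop),
     pratt_comonoid A W -> W u -> W v -> (forall a, u a -> v a) ->
     pratt_comonoid (Auv u v) (Wuv W u v)).
Proof.
  split; [|split; [|split]].
  - intros A W HW; split; [now apply pratt_comonoid_Wneg | apply T1_Wneg].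
  - exact pratt_comonoid_Wbigcap.
  - exact pratt_comonoid_Wpush.
  - intros A W u v HW Wu Wv sub_uv; now apply pratt_comonoid_Wuv.
Qed.
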